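(* In each of the categories $\mathbf{OSp}$, $\mathbf{Norm}$ and $\mathbf{Ban}$, the only finitely presentable object is the zero space $\{0\}$.
   Context: The ground field is $\mathbb{R}$ or $\mathbb{C}$. $\mathbf{OSp}$ is the category of (not necessarily complete) operator spaces with completely contractive linear maps; $\mathbf{Norm}$ (resp. $\mathbf{Ban}$) is the category of normed (resp. Banach) spaces with contractive linear maps. An object $c$ of a category $\mathcal{C}$ is finitely presentable ($\aleph_0$-presentable) if the functor $\mathcal{C}(c,-)$ preserves directed colimits. *)

From HB Require Import structures.
From mathcomp Require Import all_boot all_order all_algebra.
From mathcomp Require Export complex.
From mathcomp Require Import all_classical all_reals all_analysis.
Set Implicit Arguments. Unset Strict Implicit. Unset Printing Implicit Defensive.
Import Order.TTheory GRing.Theory Num.Theory.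
Local Open Scope ring_scope.

(* Two morphisms are equal iff their underlying functions agree.      *)
Record ccat := CCat {
  cobj : Type;
  ccar : cobj -> Type;
  chom : forall a b : cobj, (ccar a -> ccar b) -> Prop }.

Record directed_poset := DirectedPoset {
  dp_idx :> Type;
  dp_le : dp_idx -> dp_idx -> Prop;
  dp_refl : forall i, dp_le i i;
  dp_trans : forall i j k, dp_le i j -> dp_le j k -> dp_le i k;
  dp_antisym : forall i j, dp_le i j -> dp_le j i -> i = j;
  dp_inhabited : inhabited dp_idx;
  dp_directed : forall i j, exists k, dp_le i k /\ dp_le j k }.

Record ddiag (C : ccat) (P : directed_poset) := DDiag {
  dobj : P -> cobj C;
  dmap : forall i j : P, dp_le i j -> ccar (dobj i) -> ccar (dobj j);
  dmap_hom : forall i j (h : dp_le i j), chom (dmap h);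
  dmap_id : forall i (h : dp_le i i) x, dmap h x = x;
  dmap_comp : forall i j k (hij : dp_le i j) (hjk : dp_le j k) (hik : dp_le i k) x,
      dmap hjk (dmap hij x) = dmap hik x }.

Section Colimits.
Variables (C : ccat) (P : directed_poset) (D : ddiag C P).

Definition is_cocone (L : cobj C) (lam : forall i : P, ccar (dobj D i) -> ccar L) :=
  (forall i, chom (lam i)) /\
  (forall i j (h : dp_le i j) x, lam j (@dmap _ _ D _ _ h x) = lam i x).

Definition is_colimit (L : cobj C) (lam : forall i : P, ccar (dobj D i) -> ccar L) :=
  is_cocone lam /\
  forall (M : cobj C) (mu : forall i : P, ccar (dobj D i) -> ccar M),
    is_cocone mu ->
    exists u : ccar L -> ccar M,
      (chom u /\ forall i x, u (lam i x) = mu i x) /\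
      forall u' : ccar L -> ccar M,
        chom u' -> (forall i x, u' (lam i x) = mu i x) -> forall y, u' y = u y.

Definition homset (c a : cobj C) := {f : ccar c -> ccar a | chom f}.

(* The functor C(c,-) sends the cocone (L, lam) to a colimit cocone in   *)
(* the category of types/sets: the cocone  C(c, D i) -> C(c, L),         *)
(* f |-> lam i o f  satisfies the universal property of the colimit of   *)
(* the diagram  i |-> C(c, D i)  (with maps f |-> dmap h o f).           *)
Definition hom_preserves (c : cobj C) (L : cobj C)
    (lam : forall i : P, ccar (dobj D i) -> ccar L) :=
  forall (S : Type) (g : forall i : P, homset c (dobj D i) -> S),
    (forall i j (h : dp_le i j) (f : homset c (dobj D i)) (f' : homset c (dobj D j)),
        (forall x, sval f' x = @dmap _ _ D _ _ h (sval f x)) -> g j f' = g i f) ->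
    exists u : homset c L -> S,
      (forall i (f : homset c (dobj D i)) (f' : homset c L),
          (forall x, sval f' x = lam i (sval f x)) -> u f' = g i f) /\
      forall u' : homset c L -> S,
        (forall i (f : homset c (dobj D i)) (f' : homset c L),
            (forall x, sval f' x = lam i (sval f x)) -> u' f' = g i f) ->
        forall f, u' f = u f.
End Colimits.

Definition finitely_presentable (C : ccat) (c : cobj C) :=
  forall (P : directed_poset) (D : ddiag C P) (L : cobj C)
         (lam : forall i : P, ccar (dobj D i) -> ccar L),
    is_colimit lam -> hom_preserves c lam.

Definition fp_iff_zero (C : ccat) (is_zero : cobj C -> Prop) :=
  forall c : cobj C, finitely_presentable c <-> is_zero c.

Definition contractive_linear (K : numFieldType) (E F : normedModType K) (f : E -> F) :=
  linear f /\ forall x, `|f x| <= `|x|.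

Definition NormCat (K : numFieldType) : ccat :=
  @CCat (normedModType K) (fun E => E : Type)
        (fun E F (f : E -> F) => contractive_linear f).

Definition BanCat (K : numFieldType) : ccat :=
  @CCat (completeNormedModType K) (fun E => E : Type)
        (fun E F (f : E -> F) => @contractive_linear K E F f).

(* OSp: abstract operator spaces (Ruan's axioms), not necessarily      *)
(* complete, with completely contractive linear maps.                  *)
Section OpSpace.
Variable K : numFieldType.

Definition mx_lscal (V : lmodType K) n m p (a : 'M[K]_(n, m)) (x : 'M[V]_(m, p))
  : 'M[V]_(n, p) := \matrix_(i, j) \sum_k (a i k *: x k j).
Definition mx_rscal (V : lmodType K) n m p (x : 'M[V]_(n, m)) (b : 'M[K]_(m, p))
  : 'M[V]_(n, p) := \matrix_(i, j) \sum_k (b k j *: x i k).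

Definition opnorm_le n m (a : 'M[K]_(n, m)) (c : K) :=
  0 <= c /\
  forall v : 'cV[K]_m,
    \sum_(i < n) `|(a *m v) i 0| ^+ 2 <= c ^+ 2 * \sum_(j < m) `|v j 0| ^+ 2.

Record opspace := OpSpace {
  os_car :> lmodType K;
  os_norm : forall n, 'M[os_car]_(n, n) -> K;
  os_norm_ge0 : forall n (x : 'M[os_car]_(n, n)), 0 <= os_norm x;
  os_norm_eq0 : forall n (x : 'M[os_car]_(n, n)), os_norm x = 0 -> x = 0;
  os_normD : forall n (x y : 'M[os_car]_(n, n)), os_norm (x + y) <= os_norm x + os_norm y;
  os_normZ : forall n (a : K) (x : 'M[os_car]_(n, n)),
      os_norm (map_mx ( *:%R a) x) = `|a| * os_norm x;
  os_R1 : forall m n (x : 'M[os_car]_(m, m)) (y : 'M[os_car]_(n, n)),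
      os_norm (block_mx x 0 0 y) = Num.max (os_norm x) (os_norm y);
  os_R2 : forall m n (a : 'M[K]_(n, m)) (x : 'M[os_car]_(m, m)) (b : 'M[K]_(m, n)) (ca cb : K),
      opnorm_le a ca -> opnorm_le b cb ->
      os_norm (mx_rscal (mx_lscal a x) b) <= ca * os_norm x * cb }.

Definition completely_contractive (E F : opspace) (f : E -> F) :=
  linear f /\ forall n (x : 'M[E]_(n, n)), os_norm (map_mx f x) <= os_norm x.

Definition OSpCat : ccat :=
  @CCat opspace (fun E => os_car E : Type) completely_contractive.
End OpSpace.

Arguments fp_iff_zero : clear implicits.

Definition only_fp_object_is_zero (K : numFieldType) : Prop :=
  fp_iff_zero (OSpCat K) (fun E => forall x : os_car E, x = 0) /\
  fp_iff_zero (NormCat K) (fun E => forall x : E, x = 0) /\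
  fp_iff_zero (BanCat K) (fun E => forall x : E, x = 0).

From HB Require Import structures.
From mathcomp Require Import all_boot all_order all_algebra.
From mathcomp Require Import complex.
From mathcomp Require Import ring.
From mathcomp Require Import all_classical all_reals all_analysis.
Set Implicit Arguments. Unset Strict Implicit. Unset Printing Implicit Defensive.
Import Order.TTheory GRing.Theory Num.Theory.
Local Open Scope ring_scope.

(* A nonzero space c is the colimit of the directed diagram of copies of c
   indexed by 0 < r < 1, with the contractions (r / s) *: _ as transition maps
   and r *: _ as colimit maps: a cocone mu induces y |-> mu r (r^-1 *: y), which
   is contractive because it is so up to every factor r^-1 > 1.  If c were
   finitely presentable, the identity of c would factor through some stage,
   making the expansion r^-1 *: _ contractive.  Conversely, all hom-sets out of
   the zero space are singletons, and a directed colimit of singletons is a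
   singleton. *)

Lemma half_gt0_lt1 (K : numFieldType) : 0 < (2^-1 : K) < 1.
Proof. by rewrite invr_gt0 ?invf_lt1 ?ltr0n ?ltr1n. Qed.

Lemma ler_mul01Pr (K : numFieldType) (x y : K) : 0 <= x ->
  reflect (forall r, 0 < r < 1 -> r * x <= y) (x <= y).
Proof.
move=> x0; apply: (iffP idP) => [xy r /andP[_ r1] | le_rx_y].
  by rewrite (le_trans _ xy) // ler_piMl // ltW.
apply/ler_addgt0Pr => e e0; set s := 1 + x + e.
have x1 : 0 < 1 + x := ltr_wpDr x0 ltr01.
have s0 : 0 < s := ltr_pwDr e0 (ltW x1).
(* [r := (1 + x) / s] loses at most [e * (x / s) <= e] of [x]. *)
have r01 : 0 < (1 + x) / s < 1.
  by rewrite divr_gt0 //= ltr_pdivrMr // mul1r /s ltrDl.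
rewrite -lerBlDr; apply: le_trans (le_rx_y _ r01).
have -> : (1 + x) / s * x = x - e * (x / s).
  by rewrite /s; field; rewrite -/s gt_eqF.
by rewrite lerD2l lerN2 ler_piMr ?ltW // ltr_pdivrMr // mul1r /s addrAC ltr_pwDl ?addr_gt0.
Qed.

Lemma hom_preserves_factor (C : ccat) (P : directed_poset) (D : ddiag C P)
    (c L : cobj C) (lam : forall i : P, ccar (dobj D i) -> ccar L) :
  hom_preserves c lam -> forall f : homset c L,
  exists i (g : homset c (dobj D i)), forall x, sval f x = lam i (sval g x).
Proof.
move=> lam_pres f.
(* Both [fun _ => True] and "factors through some stage" induce the constant
   cocone [True] on the hom-sets, so uniqueness of the induced map equates them. *)
have [u [_ u_unique]] := lam_pres Prop (fun _ _ => True) (fun _ _ _ _ _ _ => erefl).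
pose factors (f' : homset c L) := exists i (g : homset c (dobj D i)),
  forall x, sval f' x = lam i (sval g x).
have true_u : True = u f by apply: (u_unique (fun _ => True)).
have factors_u : factors f = u f.
  apply: u_unique => i g f' f'E; apply: propext; split=> // _.
  by exists i, g.
by rewrite -/(factors f) factors_u -true_u.
Qed.


Section OpenUnitInterval.
Variable K : numFieldType.

Definition unit_itv := {r : K | 0 < r < 1}.

Definition half_itv : unit_itv := exist _ 2^-1 (half_gt0_lt1 K).

Lemma unit_itv_gt0 (r : unit_itv) : 0 < sval r.
Proof. by case/andP: (svalP r). Qed.

Lemma unit_itv_lt1 (r : unit_itv) : sval r < 1.
Proof. by case/andP: (svalP r). Qed.

Lemma unit_itv_directed (r s : unit_itv) :
  exists t : unit_itv, sval r <= sval t /\ sval s <= sval t.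
Proof.
have real_r := gtr0_real (unit_itv_gt0 r).
have real_s := gtr0_real (unit_itv_gt0 s).
by case: (real_leP real_r real_s) => [le_rs | /ltW le_sr]; [exists s | exists r].
Qed.

Lemma unit_itv_le_anti (r s : unit_itv) :
  sval r <= sval s -> sval s <= sval r -> r = s.
Proof. by move=> le_rs le_sr; apply/val_inj/le_anti; rewrite le_rs. Qed.

Definition unit_itv_dposet : directed_poset :=
  @DirectedPoset unit_itv (fun r s => sval r <= sval s)
    (fun r => lexx _) (fun r s t => @le_trans _ _ _ _ _)
    unit_itv_le_anti
    (inhabits half_itv) unit_itv_directed.
End OpenUnitInterval.

Section PointedDilations.
Variables (K : numFieldType) (C : ccat) (z : forall a : cobj C, ccar a).
Variable sc : forall a : cobj C, K -> ccar a -> ccar a.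
Arguments sc : clear implicits.
Hypothesis hom_zero : forall a b (f : ccar a -> ccar b), chom f -> f (z a) = z b.
Hypothesis hom_cst_zero : forall a b, chom (fun _ : ccar a => z b).
Hypothesis scale1 : forall a (x : ccar a), sc a 1 x = x.
Hypothesis scaleA : forall a r s (x : ccar a), sc a r (sc a s x) = sc a (r * s) x.
Hypothesis hom_contraction : forall a r, 0 < r <= 1 -> chom (sc a r).
Hypothesis hom_of_shrunk : forall a b (f : ccar a -> ccar b),
  (forall r, 0 < r < 1 -> chom (f \o sc a r)) -> chom f.
Hypothesis not_hom_expansion : forall a r,
  (exists x : ccar a, x <> z a) -> 1 < r -> ~ chom (sc a r).

Lemma zero_fp (c : cobj C) : (forall x : ccar c, x = z c) -> finitely_presentable c.
Proof.
move=> c0 P D L lam [[lam_hom _] _] S g g_compat.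
have hom_from_c a (f : ccar c -> ccar a) x : chom f -> f x = z a.
  by move=> f_hom; rewrite (c0 x) hom_zero.
case: (dp_inhabited P) => i0.
pose zero_hom a : homset c a := exist _ (fun _ => z a) (hom_cst_zero c a).
have g_const i f : g i f = g i0 (zero_hom _).
  have [k [le_ik le_i0k]] := dp_directed i i0.
  rewrite -(g_compat _ _ le_ik f (zero_hom _)); last first.
    by move=> x /=; rewrite (hom_from_c _ _ _ (svalP f)) (hom_zero (dmap_hom D le_ik)).
  by apply: g_compat => x /=; rewrite (hom_zero (dmap_hom D le_i0k)).
exists (fun _ => g i0 (zero_hom _)); split=> [i f f' _ | u' u'_compat f].
  by rewrite g_const.
by apply: u'_compat => x /=; rewrite (hom_from_c _ _ _ (svalP f)) (hom_zero (lam_hom i0)).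
Qed.

Lemma scK a r : r != 0 -> cancel (sc a r) (sc a r^-1).
Proof. by move=> r0 x; rewrite scaleA mulVf // scale1. Qed.

Lemma scVK a r : r != 0 -> cancel (sc a r^-1) (sc a r).
Proof. by move=> r0 x; rewrite scaleA divff // scale1. Qed.

Let P := unit_itv_dposet K.

Lemma unit_itv_neq0 (r : P) : sval r != 0.
Proof. by rewrite gt_eqF ?unit_itv_gt0. Qed.

Section DilationDiagram.
Variable c : cobj C.

Definition dilation_map (r s : P) (le_rs : dp_le r s) := sc c (sval r / sval s).

Lemma dilation_map_hom r s (le_rs : dp_le r s) : chom (dilation_map le_rs).
Proof.
apply: hom_contraction.
by rewrite divr_gt0 ?unit_itv_gt0 //= ler_pdivrMr ?unit_itv_gt0 // mul1r.
Qed.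

Lemma dilation_map_id r (le_rr : dp_le r r) x : dilation_map le_rr x = x.
Proof. by rewrite /dilation_map divff ?unit_itv_neq0 // scale1. Qed.

Lemma dilation_map_comp r s t (le_rs : dp_le r s) (le_st : dp_le s t)
    (le_rt : dp_le r t) x :
  dilation_map le_st (dilation_map le_rs x) = dilation_map le_rt x.
Proof.
by rewrite /dilation_map scaleA mulrC mulrA divfK ?unit_itv_neq0.
Qed.

Definition dilation_diagram : ddiag C P :=
  DDiag dilation_map_hom dilation_map_id dilation_map_comp.

Definition dilation_cocone (r : P) : ccar c -> ccar c := sc c (sval r).

Lemma dilation_colimit : @is_colimit C P dilation_diagram c dilation_cocone.
Proof.
have cocone : is_cocone (D := dilation_diagram) dilation_cocone.
  split=> [r | r s le_rs x].
    by apply: hom_contraction; rewrite unit_itv_gt0 ltW ?unit_itv_lt1.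
  by rewrite /dilation_cocone /= /dilation_map scaleA mulrC divfK ?unit_itv_neq0.
split=> // M mu [mu_hom mu_compat].
have mu_up r s : dp_le r s -> forall y,
    mu r (sc c (sval r)^-1 y) = mu s (sc c (sval s)^-1 y).
  move=> le_rs y; rewrite -(mu_compat r s le_rs) /= /dilation_map scaleA.
  by rewrite mulrAC divff ?unit_itv_neq0 // mul1r.
pose h : P := half_itv K.
pose u y := mu h (sc c (sval h)^-1 y).
have uE r x : u (dilation_cocone r x) = mu r x.
  have [t [le_ht le_rt]] := dp_directed h r.
  by rewrite /u (mu_up _ _ le_ht) -(mu_up _ _ le_rt) scK ?unit_itv_neq0.
exists u; split=> [| u' _ u'E y].
  split=> //; apply: hom_of_shrunk => r r01.
  have -> : u \o sc c r = mu (exist _ r r01).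
    by apply/funext => x; apply: (uE (exist _ r r01)).
  exact: mu_hom.
by rewrite -[in LHS](scVK (unit_itv_neq0 h) y) u'E.
Qed.

Lemma nonzero_not_fp : (exists x : ccar c, x <> z c) -> ~ finitely_presentable c.
Proof.
move=> c_nz fp.
have id_hom : chom (@id (ccar c)).
  by rewrite -(funext (@scale1 c)); apply: hom_contraction; rewrite ltr01 lexx.
have [r [g gE]] :=
  hom_preserves_factor (fp _ _ _ _ dilation_colimit) (exist _ id id_hom).
have {}gE x : x = sc c (sval r) (sval g x) := gE x.
have gE' : sval g = sc c (sval r)^-1.
  by apply/funext => x; rewrite [in RHS](gE x) scK ?unit_itv_neq0.
apply: (not_hom_expansion c_nz (r := (sval r)^-1)).
  by rewrite invf_gt1 ?unit_itv_gt0 ?unit_itv_lt1.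
by rewrite -gE'; exact: svalP.
Qed.
End DilationDiagram.

Lemma fp_iff_zero_of_dilations : fp_iff_zero C (fun c => forall x : ccar c, x = z c).
Proof.
move=> c; split=> [fp | /zero_fp //].
by apply: contrapT => /existsNP c_nz; exact: nonzero_not_fp c_nz fp.
Qed.
End PointedDilations.

Section LinearMaps.
Variables (K : numFieldType) (V W : lmodType K).

Lemma linear_scale (r : K) : linear ( *:%R r : V -> V).
Proof. by move=> a u v; rewrite /= scalerDr !scalerA mulrC. Qed.

Lemma linear_map0 (f : V -> W) : linear f -> f 0 = 0.
Proof. by move=> lin_f; rewrite -(subrr (0 : V)) (zmod_morphism_linear lin_f) subrr. Qed.

Lemma linear_cst0 : linear (fun _ : V => 0 : W).
Proof. by move=> a u v; rewrite scaler0 addr0. Qed.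

Lemma linear_of_comp_scale (f : V -> W) (r : K) :
  r != 0 -> linear (f \o *:%R r) -> linear f.
Proof.
move=> r0 lin_fr; have fE y : f y = (f \o *:%R r) (r^-1 *: y).
  by rewrite /= scalerA divff // scale1r.
by move=> a u v; rewrite !fE scalerDr -lin_fr !scalerA mulrC.
Qed.

Lemma linear_of_shrunk (f : V -> W) :
  (forall r, 0 < r < 1 -> linear (f \o *:%R r)) -> linear f.
Proof.
move=> lin_fr; have [half_gt0 _] := andP (half_gt0_lt1 K).
exact: (linear_of_comp_scale (lt0r_neq0 half_gt0) (lin_fr _ (half_gt0_lt1 K))).
Qed.
End LinearMaps.

Section NormedSpaces.
Variable K : numFieldType.
Implicit Types E F : normedModType K.

Lemma contractive_scale E (r : K) : `|r| <= 1 -> contractive_linear ( *:%R r : E -> E).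
Proof.
move=> r1; split=> [|x]; first exact: linear_scale.
by rewrite normrZ ler_piMl.
Qed.

Lemma contractive_cst0 E F : contractive_linear (fun _ : E => 0 : F).
Proof. by split=> [|x]; rewrite ?normr0 //; exact: linear_cst0. Qed.

Lemma contractive_of_shrunk E F (f : E -> F) :
  (forall r, 0 < r < 1 -> contractive_linear (f \o *:%R r)) -> contractive_linear f.
Proof.
move=> contr_fr; have lin_f : linear f.
  by apply: linear_of_shrunk => r r01; case: (contr_fr r r01).
split=> // x; apply/ler_mul01Pr => // r /[dup] r01 /andP[r0 _].
have [_ /(_ x)] := contr_fr r r01.
by rewrite /= (scalable_linear lin_f) normrZ gtr0_norm.
Qed.

Lemma not_contractive_expansion E (r : K) :
  (exists x : E, x <> 0) -> 1 < `|r| -> ~ contractive_linear ( *:%R r : E -> E).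
Proof.
move=> [x /eqP x_neq0] r1 [_ /(_ x)].
by rewrite normrZ ger_pMl ?normr_gt0 // lt_geF.
Qed.

Lemma normed_fp_iff_zero (O : Type) (car : O -> normedModType K) :
  fp_iff_zero (@CCat O car (fun a b (f : car a -> car b) => contractive_linear f))
    (fun a => forall x : car a, x = 0).
Proof.
pose C := @CCat O car (fun a b (f : car a -> car b) => contractive_linear f).
apply: (@fp_iff_zero_of_dilations K C (fun a => 0 : car a) (fun a => @GRing.scale K (car a))).
- by move=> a b f [lin_f _]; exact: linear_map0.
- by move=> a b; exact: contractive_cst0.
- by move=> a x; exact: scale1r.
- by move=> a r s x; exact: scalerA.
- by move=> a r /andP[r0 r1]; apply: contractive_scale; rewrite ger0_norm // ltW.
- by move=> a b f; exact: contractive_of_shrunk.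
- by move=> a r a_nz r1; apply: not_contractive_expansion; rewrite ?gtr0_norm ?(lt_trans ltr01).
Qed.
End NormedSpaces.

Section OperatorSpaces.
Variable K : numFieldType.
Implicit Types E F : opspace K.

Lemma os_norm0 E n : os_norm (0 : 'M[E]_n) = 0.
Proof.
have -> : (0 : 'M[E]_n) = map_mx ( *:%R 0) 0 by apply/matrixP => i j; rewrite !mxE scale0r.
by rewrite os_normZ normr0 mul0r.
Qed.

Lemma os_norm_gt0 E n (X : 'M[E]_n) : X != 0 -> 0 < os_norm X.
Proof. by move=> /eqP X_neq0; rewrite lt_def os_norm_ge0 andbT; apply/eqP => /os_norm_eq0. Qed.

Lemma completely_contractive_scale E (r : K) :
  `|r| <= 1 -> completely_contractive ( *:%R r : E -> E).
Proof.
move=> r1; split=> [|n X]; first exact: linear_scale.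
by rewrite os_normZ ler_piMl ?os_norm_ge0.
Qed.

Lemma completely_contractive_cst0 E F : completely_contractive (fun _ : E => 0 : F).
Proof.
split=> [|n X]; first exact: linear_cst0.
have -> : map_mx (fun _ : E => 0 : F) X = 0 by apply/matrixP => i j; rewrite !mxE.
by rewrite os_norm0 os_norm_ge0.
Qed.

Lemma completely_contractive_of_shrunk E F (f : E -> F) :
  (forall r, 0 < r < 1 -> completely_contractive (f \o *:%R r)) ->
  completely_contractive f.
Proof.
move=> cc_fr; have lin_f : linear f.
  by apply: linear_of_shrunk => r r01; case: (cc_fr r r01).
split=> // n X; apply/ler_mul01Pr; first exact: os_norm_ge0.
move=> r /[dup] r01 /andP[r0 _]; have [_ /(_ n X)] := cc_fr r r01.
have -> : map_mx (f \o *:%R r) X = map_mx ( *:%R r) (map_mx f X).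
  by apply/matrixP => i j; rewrite !mxE /= (scalable_linear lin_f).
by rewrite os_normZ gtr0_norm.
Qed.

Lemma not_completely_contractive_expansion E (r : K) :
  (exists x : E, x <> 0) -> 1 < `|r| -> ~ completely_contractive ( *:%R r : E -> E).
Proof.
move=> [x x_neq0] r1 [_ /(_ 1%N (const_mx x))].
have X_neq0 : const_mx x != 0 :> 'M[E]_1.
  by apply/eqP => /matrixP /(_ 0 0); rewrite !mxE.
by rewrite os_normZ ger_pMl ?os_norm_gt0 // lt_geF.
Qed.

Lemma OSp_fp_iff_zero : fp_iff_zero (OSpCat K) (fun E => forall x : os_car E, x = 0).
Proof.
apply: (@fp_iff_zero_of_dilations K (OSpCat K) (fun E => 0 : E) (fun E => @GRing.scale K E)).
- by move=> E F f [lin_f _]; exact: linear_map0.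
- by move=> E F; exact: completely_contractive_cst0.
- by move=> E x; exact: scale1r.
- by move=> E r s x; exact: scalerA.
- by move=> E r /andP[r0 r1]; apply: completely_contractive_scale; rewrite ger0_norm // ltW.
- by move=> E F f; exact: completely_contractive_of_shrunk.
- move=> E r E_nz r1; apply: not_completely_contractive_expansion => //.
  by rewrite gtr0_norm // (lt_trans ltr01).
Qed.
End OperatorSpaces.

Theorem proposition1p6 (R : realType) :
  only_fp_object_is_zero R /\ only_fp_object_is_zero R[i].
Proof.
have fp_zero (K : numFieldType) : only_fp_object_is_zero K.
  split; first exact: OSp_fp_iff_zero.
  split; first exact: (@normed_fp_iff_zero K _ id).
  exact: (@normed_fp_iff_zero K _ (fun E : completeNormedModType K => E : normedModType K)).
by split; apply: fp_zero.
Qed.
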